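(* Let $V=\mathbb R^{p,q}$, $W$ a $C\ell^0(V)$-module, $\Pi:\wedge^2W\to V$ an $\mathfrak o(V)$-equivariant linear map, $p=p'+p''$ with $p'\equiv3\pmod4$, and $b=b(\Pi)$. Then the kernels of the linear maps $W\to W^*\otimes V$, $s\mapsto\Pi(s\wedge\cdot)$, and $W\to W^*$, $s\mapsto b(s,\cdot)$, coincide. In particular $\Pi$ is nondegenerate if and only if $b$ is nondegenerate.
   Context: Let $V=\mathbb{R}^{p,q}$ be $\mathbb R^{p+q}$ with the scalar product $\langle x,y\rangle=\sum_{i=1}^{p}x^iy^i-\sum_{j=p+1}^{p+q}x^jy^j$ and its standard orthonormal basis. The Clifford algebra $C\ell(V)$ is generated by $V$ subject to $xy+yx=-2\langle x,y\rangle 1$, with even part $C\ell^0(V)$. Identify $\mathfrak{o}(V)=\wedge^2V$ via $(x\wedge y)(z)=\langle y,z\rangle x-\langle x,z\rangle y$; the map $x\wedge y\mapsto-\frac14(xy-yx)$ is a Lie algebra isomorphism of $\mathfrak o(V)$ onto $\mathfrak{spin}(V)\subset C\ell^0(V)$, and via it $\mathfrak o(V)$ acts on any $C\ell^0(V)$-module $W$. $\Pi$ is called nondegenerate if $s\mapsto\Pi(s\wedge\cdot)$ is injective. Fix $p=p'+p''$ with $p'\equiv 3\pmod 4$; $e_1,\dots,e_{p'}$ are the first $p'$ standard basis vectors, spanning $E$, and $b(s,t)=\langle e_1,\Pi(e_2\cdots e_{p'}s\wedge t)\rangle$ for $s,t\in W$ (Clifford product acting on $W$). *)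

From HB Require Import structures.
From mathcomp Require Import all_boot all_order all_algebra.
From mathcomp Require Import reals.
Set Implicit Arguments. Unset Strict Implicit. Unset Printing Implicit Defensive.
Import Order.TTheory GRing.Theory Num.Theory.
Local Open Scope ring_scope.

(* V = R^{p,q} = R^n with n = p + q, vectors are column vectors 'cV[R]_n,
   standard orthonormal basis e_1..e_n (0-indexed here: e_{k+1} = stdb k). *)

Section Clifford.
Variable R : realType.

Definition spq (p : nat) {n : nat} (x y : 'cV[R]_n) : R :=
  \sum_(i < n) (if (i < p)%N then 1 else -1) * x i 0 * y i 0.

Definition stdb {n : nat} (k : nat) : 'cV[R]_n :=
  \col_(i < n) (if (i == k :> nat) then 1 else 0).

(* Clifford algebra Cl(V): elements are coordinates on the basis
   e_A = e_{a_1} ... e_{a_k} (a_1 < ... < a_k), A a subset of indices. *)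
Notation clif n := {ffun {set 'I_n} -> R}.

(* e_i^2 = - <e_i, e_i> *)
Definition clsq (p : nat) {n : nat} (i : 'I_n) : R :=
  if (i < p)%N then -1 else 1.

Definition symd {n : nat} (A B : {set 'I_n}) : {set 'I_n} :=
  (A :\: B) :|: (B :\: A).

(* e_A e_B = clsign A B * e_{A symd B} *)
Definition clsign (p : nat) {n : nat} (A B : {set 'I_n}) : R :=
  (-1) ^+ #|[set ab in setX A B | (ab.2 < ab.1)%N]|
  * \prod_(i in A :&: B) clsq p i.

Definition clmul (p : nat) {n : nat} (c d : clif n) : clif n :=
  [ffun C => \sum_(A : {set 'I_n}) \sum_(B : {set 'I_n})
      (if symd A B == C then c A * d B * clsign p A B else 0)].

Definition cllin {n : nat} (a : R) (c d : clif n) : clif n :=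
  [ffun A => a * c A + d A].

Definition cl1 {n : nat} : clif n := [ffun A => if A == set0 then 1 else 0].

Definition clvec {n : nat} (x : 'cV[R]_n) : clif n :=
  [ffun A => \sum_(i < n) (if A == [set i] then x i 0 else 0)].

Definition cleven {n : nat} (c : clif n) : Prop :=
  forall A : {set 'I_n}, odd #|A| -> c A = 0.

(* W = R^m (column vectors) is a Cl^0(V)-module via rho: rho restricted to
   Cl^0(V) is a unital algebra homomorphism Cl^0(V) -> End(W) = 'M_m
   (acting on the left: c . s = rho c *m s). Values of rho outside Cl^0
   are irrelevant. *)
Definition is_cl0_module (p : nat) {n m : nat} (rho : clif n -> 'M[R]_m) : Prop :=
  [/\ rho cl1 = 1%:M,
      (forall (a : R) (c d : clif n), cleven c -> cleven d ->
          rho (cllin a c d) = a *: rho c + rho d) &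
      (forall c d : clif n, cleven c -> cleven d ->
          rho (clmul p c d) = rho c *m rho d)].

(* a linear map wedge^2 W -> V, given as an alternating bilinear map *)
Definition is_wedge2_map {n m : nat} (Pi : 'cV[R]_m -> 'cV[R]_m -> 'cV[R]_n) : Prop :=
  [/\ (forall (a : R) (s s' t : 'cV[R]_m), Pi (a *: s + s') t = a *: Pi s t + Pi s' t),
      (forall (a : R) (s t t' : 'cV[R]_m), Pi s (a *: t + t') = a *: Pi s t + Pi s t') &
      (forall s : 'cV[R]_m, Pi s s = 0)].

(* (x wedge y) in o(V) acting on V: z |-> <y,z> x - <x,z> y *)
Definition soV (p : nat) {n : nat} (x y z : 'cV[R]_n) : 'cV[R]_n :=
  spq p y z *: x - spq p x z *: y.

(* image of x wedge y in spin(V) : -1/4 (xy - yx) *)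
Definition spinel (p : nat) {n : nat} (x y : 'cV[R]_n) : clif n :=
  [ffun A => (- 4%:R^-1) * (clmul p (clvec x) (clvec y) A
                              - clmul p (clvec y) (clvec x) A)].

(* o(V)-equivariance of Pi, for o(V) acting on W through spin(V) *)
Definition equivariant (p : nat) {n m : nat} (rho : clif n -> 'M[R]_m)
    (Pi : 'cV[R]_m -> 'cV[R]_m -> 'cV[R]_n) : Prop :=
  forall (x y : 'cV[R]_n) (s t : 'cV[R]_m),
    Pi (rho (spinel p x y) *m s) t + Pi s (rho (spinel p x y) *m t)
    = soV p x y (Pi s t).

(* the Clifford product e_2 e_3 ... e_{p'} (1-based indices as in the paper) *)
Definition gammaE (p p' : nat) {n : nat} : clif n :=
  foldr (fun k acc => clmul p (clvec (stdb k)) acc) cl1 (iota 1 (p'.-1)).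

(* b(s,t) = < e_1, Pi(e_2 ... e_{p'} s wedge t) > *)
Definition bform (p p' : nat) {n m : nat} (rho : clif n -> 'M[R]_m)
    (Pi : 'cV[R]_m -> 'cV[R]_m -> 'cV[R]_n) (s t : 'cV[R]_m) : R :=
  spq p (stdb 0) (Pi (rho (gammaE p p') *m s) t).

Definition Pi_nondeg {n m : nat} (Pi : 'cV[R]_m -> 'cV[R]_m -> 'cV[R]_n) : Prop :=
  forall s s' : 'cV[R]_m, (forall t, Pi s t = Pi s' t) -> s = s'.

Definition form_nondeg {m : nat} (b : 'cV[R]_m -> 'cV[R]_m -> R) : Prop :=
  forall s s' : 'cV[R]_m, (forall t, b s t = b s' t) -> s = s'.

End Clifford.

From HB Require Import structures.
From mathcomp Require Import all_boot all_order all_algebra.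
From mathcomp Require Import reals.
From mathcomp Require Import ring lra zify.
Import Order.TTheory GRing.Theory Num.Theory.
Local Open Scope ring_scope.
Set Implicit Arguments. Unset Strict Implicit.

(* The kernel K of s |-> Pi(s wedge .) is stable under spin(V) by equivariance, hence
   under every even basis monomial e_A, in particular under Gamma = e_2 ... e_p'
   (an even product since p' is odd); so s in K gives b(s, .) = 0. Conversely,
   b(s, .) = 0 says that the e_1-coordinate of Pi(Gamma s wedge .) vanishes.
   Equivariance under e_1 e_k, whose square is a nonzero scalar, transports this
   vanishing to the e_k-coordinate, so Gamma s lies in K; and Gamma^2 is a nonzero
   scalar, so s lies in K. *)


Section CliffordBasis.
Variables (R : realType) (p n : nat).
Notation clif := {ffun {set 'I_n} -> R}.

Definition clbase (A : {set 'I_n}) : clif := [ffun C => if C == A then 1 else 0].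
Definition clscale (a : R) (c : clif) : clif := [ffun C => a * c C].
Definition clzero : clif := [ffun _ => 0].

Lemma clbase0 : clbase set0 = cl1 R.
Proof. by apply/ffunP => C; rewrite !ffunE. Qed.

Lemma clvec_stdb (i : 'I_n) : clvec (stdb R i) = clbase [set i].
Proof.
apply/ffunP => C; rewrite !ffunE (bigD1 i) //= big1 ?addr0; first by rewrite mxE eqxx.
by move=> j ji; rewrite mxE val_eqE (negbTE ji); case: ifP.
Qed.

Lemma clmul_clbase (A B : {set 'I_n}) :
  clmul p (clbase A) (clbase B) = clscale (clsign R p A B) (clbase (symd A B)).
Proof.
apply/ffunP => C; rewrite !ffunE (bigD1 A) //= [X in _ + X]big1 ?addr0; last first.
  move=> A' A'A; apply: big1 => B' _; rewrite !ffunE (negbTE A'A).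
  by case: ifP; rewrite ?mul0r.
rewrite (bigD1 B) //= [X in _ + X]big1 ?addr0; last first.
  move=> B' B'B; rewrite !ffunE (negbTE B'B) eqxx.
  by case: ifP; rewrite ?mulr0 ?mul0r.
by rewrite !ffunE !eqxx !mul1r eq_sym; case: ifP; rewrite ?mulr1 ?mulr0.
Qed.

Lemma clmul_clbase_sorted (A B : {set 'I_n}) : {in A & B, forall x y : 'I_n, (x < y)%N} ->
  clmul p (clbase A) (clbase B) = clbase (A :|: B).
Proof.
move=> AltB; have AnB x : x \in A -> (x \in B) = false.
  by move=> xA; apply/negbTE/negP => xB; have := AltB x x xA xB; rewrite ltnn.
rewrite clmul_clbase.
have -> : symd A B = A :|: B.
  apply/setP => x; rewrite !inE; case xA: (x \in A).
    by rewrite (AnB x xA).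
  by rewrite andbF.
have -> : clsign R p A B = 1.
  rewrite /clsign; have -> : [set ab in setX A B | (ab.2 < ab.1)%N] = set0.
    apply/setP => -[x y]; rewrite !inE /=.
    apply/negbTE/negP => /andP[/andP[xA yB]]; apply/negP.
    by rewrite -leqNgt ltnW // AltB.
  rewrite cards0 expr0 mul1r big1 // => z; rewrite inE => /andP[zA].
  by rewrite (AnB z zA).
by apply/ffunP => C; rewrite !ffunE mul1r.
Qed.

Lemma clsq_neq0 (i : 'I_n) : clsq R p i != 0.
Proof. by rewrite /clsq; case: ifP; rewrite ?oppr_eq0 oner_eq0. Qed.

Lemma clsign_neq0 (A B : {set 'I_n}) : clsign R p A B != 0.
Proof.
rewrite /clsign mulf_neq0 ?expf_neq0 ?oppr_eq0 ?oner_eq0 //.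
apply: (big_ind (fun x : R => x != 0)); [exact: oner_neq0 | exact: mulf_neq0 |].
by move=> i _; apply: clsq_neq0.
Qed.

Lemma clsign_set1_gt (a b : 'I_n) : (a < b)%N -> clsign R p [set b] [set a] = -1.
Proof.
move=> ab; have ba : b != a by rewrite neq_ltn ab orbT.
rewrite /clsign.
have -> : [set ab in setX [set b] [set a] | (ab.2 < ab.1)%N] = [set (b, a)].
  apply/setP => -[x y]; rewrite !inE /= xpair_eqE.
  by case: eqP => [->|] //=; case: eqP => [->|] //=; rewrite ab.
have -> : [set b] :&: [set a] = set0.
  by apply/setP => x; rewrite !inE; case: (eqVneq x b) => [->|] //=; rewrite (negbTE ba).
by rewrite cards1 big_set0 expr1 mulr1.
Qed.

Lemma clsign_set2 (a b : 'I_n) : (a < b)%N ->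
  clsign R p [set a; b] [set a; b] = - (clsq R p a * clsq R p b).
Proof.
move=> ab; have nab : a != b by rewrite neq_ltn ab.
rewrite /clsign.
have -> : [set ab in setX [set a; b] [set a; b] | (ab.2 < ab.1)%N] = [set (b, a)].
  apply/setP => -[x y]; rewrite !inE /= xpair_eqE.
  case: (eqVneq x a) => [->|xa].
    rewrite (negbTE nab) /=.
    case: (eqVneq y a) => [->|_]; first by rewrite ltnn andbF.
    by case: (eqVneq y b) => [->|_] //=; rewrite ltnNge ltnW.
  rewrite /=; case: (eqVneq x b) => [->|xb] //=.
  case: (eqVneq y a) => [->|_] /=; first by rewrite ab.
  by case: (eqVneq y b) => [->|_] /=; rewrite ?ltnn.
by rewrite setIid cards1 expr1 big_setU1 ?inE //= big_set1 mulN1r.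
Qed.

Lemma spinel_stdb (a b : 'I_n) : (a < b)%N ->
  spinel p (stdb R a) (stdb R b) = clscale (- 2%:R^-1) (clbase [set a; b]).
Proof.
move=> ab; have ba : b != a by rewrite neq_ltn ab orbT.
have symd_ba : symd [set b] [set a] = [set a; b].
  apply/setP => x; rewrite !inE.
  case: (eqVneq x a) => [->|xa]; first by rewrite eq_sym (negbTE ba).
  by case: (eqVneq x b).
rewrite /spinel !clvec_stdb clmul_clbase_sorted; last first.
  by move=> x y; rewrite !inE => /eqP -> /eqP ->.
rewrite clmul_clbase symd_ba clsign_set1_gt //.
by apply/ffunP => C; rewrite !ffunE; case: ifP => _; field.
Qed.

Definition iset (a b : nat) : {set 'I_n} := [set i : 'I_n | (a <= i < b)%N].

Lemma iset_empty a b : (b <= a)%N -> iset a b = set0.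
Proof. by move=> ba; apply/setP => i; rewrite !inE; lia. Qed.

Lemma iset_cons a b (ha : (a < n)%N) : (a < b)%N -> iset a b = Ordinal ha |: iset a.+1 b.
Proof. by move=> ab; apply/setP => i; rewrite !inE -val_eqE /=; lia. Qed.

Lemma card_iset a b : (b <= n)%N -> #|iset a b| = (b - a)%N.
Proof.
move=> bn; move Hk : (b - a)%N => k; elim: k a Hk => [|k IH] a Hk.
  by rewrite iset_empty ?cards0 //; lia.
have ha : (a < n)%N by lia.
rewrite (@iset_cons a b ha) ?cardsU1 ?IH ?inE /= ?ltnn //; lia.
Qed.

Lemma foldr_clvec_iota a l : (a + l <= n)%N ->
  foldr (fun k c => clmul p (clvec (stdb R k)) c) (cl1 R) (iota a l)
  = clbase (iset a (a + l)).
Proof.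
elim: l a => [|l IH] a hal; first by rewrite addn0 iset_empty // clbase0.
have ha : (a < n)%N by lia.
rewrite /= IH; last lia.
rewrite -addSnnS (iset_cons ha); last lia.
rewrite -[stdb R a]/(stdb R (Ordinal ha)) clvec_stdb clmul_clbase_sorted //.
by move=> x y; rewrite !inE => /eqP -> /andP[].
Qed.

Lemma gammaE_clbase p' : (0 < p' <= n)%N -> gammaE R p p' = clbase (iset 1 p').
Proof.
by case/andP=> p'0 p'n; rewrite /gammaE foldr_clvec_iota add1n prednK.
Qed.

End CliffordBasis.

Section ScalarProduct.
Variables (R : realType) (p n : nat).

Lemma spq_stdb (k : 'I_n) (z : 'cV[R]_n) : spq p (stdb R k) z = - clsq R p k * z k 0.
Proof.
rewrite /spq (bigD1 k) //= big1 ?addr0.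
  by rewrite mxE eqxx mulr1 /clsq; case: ifP; rewrite ?opprK.
by move=> i ik; rewrite mxE val_eqE (negbTE ik) mulr0 mul0r.
Qed.

Lemma spq0r (x : 'cV[R]_n) : spq p x 0 = 0.
Proof. by rewrite /spq big1 // => i _; rewrite mxE mulr0. Qed.

Lemma spqBr (x z z' : 'cV[R]_n) : spq p x (z - z') = spq p x z - spq p x z'.
Proof. by rewrite /spq -sumrB; apply: eq_bigr => i _; rewrite !mxE; ring. Qed.

Lemma soV0 (x y : 'cV[R]_n) : soV p x y 0 = 0.
Proof. by rewrite /soV !spq0r !scale0r subr0. Qed.

End ScalarProduct.

Section Wedge2Map.
Variables (R : realType) (n m : nat).
Variable Pi : 'cV[R]_m -> 'cV[R]_m -> 'cV[R]_n.
Hypothesis HPi : is_wedge2_map Pi.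

Lemma Pi0l t : Pi 0 t = 0.
Proof.
case: HPi => linl _ _; have := linl 1 0 0 t; rewrite scale1r addr0 scale1r => h.
by apply: (addrI (Pi 0 t)); rewrite addr0 -h.
Qed.

Lemma Pi0r s : Pi s 0 = 0.
Proof.
case: HPi => _ linr _; have := linr 1 s 0 0; rewrite scale1r addr0 scale1r => h.
by apply: (addrI (Pi s 0)); rewrite addr0 -h.
Qed.

Lemma PiZl a s t : Pi (a *: s) t = a *: Pi s t.
Proof. by case: HPi => linl _ _; rewrite -[a *: s]addr0 linl Pi0l addr0. Qed.

Lemma PiZr a s t : Pi s (a *: t) = a *: Pi s t.
Proof. by case: HPi => _ linr _; rewrite -[a *: t]addr0 linr Pi0r addr0. Qed.

Lemma PiBl s s' t : Pi (s - s') t = Pi s t - Pi s' t.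
Proof.
case: HPi => linl _ _; have := linl 1 s (- s') t.
by rewrite !scale1r => ->; rewrite -(scaleN1r s') PiZl scaleN1r.
Qed.

End Wedge2Map.

Section EvenModule.
Variables (R : realType) (p n m : nat).
Variable rho : {ffun {set 'I_n} -> R} -> 'M[R]_m.
Hypothesis Hrho : is_cl0_module p rho.

Lemma cleven_clbase (A : {set 'I_n}) : ~~ odd #|A| -> cleven (clbase R A).
Proof. by move=> evA C; rewrite ffunE; case: eqP => // ->; rewrite (negbTE evA). Qed.

Lemma cleven_clzero : cleven (clzero R n).
Proof. by move=> C _; rewrite ffunE. Qed.

Lemma rho_clzero : rho (clzero R n) = 0.
Proof.
case: Hrho => _ lin _; have := lin 1 _ _ cleven_clzero cleven_clzero.
have -> : cllin 1 (clzero R n) (clzero R n) = clzero R n.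
  by apply/ffunP => C; rewrite !ffunE mul1r addr0.
by rewrite scale1r => h; apply: (addrI (rho (clzero R n))); rewrite addr0 -h.
Qed.

Lemma rho_clscale a c : cleven c -> rho (clscale a c) = a *: rho c.
Proof.
case: Hrho => _ lin _ evc.
have -> : clscale a c = cllin a c (clzero R n) by apply/ffunP => C; rewrite !ffunE addr0.
by rewrite lin ?rho_clzero ?addr0 //; apply: cleven_clzero.
Qed.

Lemma rho_clmul c d : cleven c -> cleven d -> rho (clmul p c d) = rho c *m rho d.
Proof. by case: Hrho => _ _; apply. Qed.

Lemma rho_clbase_sqr (A : {set 'I_n}) : ~~ odd #|A| ->
  rho (clbase R A) *m rho (clbase R A) = clsign R p A A *: 1%:M.
Proof.
move=> /cleven_clbase evA; rewrite -rho_clmul // clmul_clbase.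
have -> : symd A A = set0 by rewrite /symd setDv setU0.
case: Hrho => rho1 _ _.
rewrite rho_clscale clbase0 ?rho1 // -clbase0.
by apply: cleven_clbase; rewrite cards0.
Qed.

End EvenModule.

Section PiKernel.
Variables (R : realType) (p n m : nat).
Variable rho : {ffun {set 'I_n} -> R} -> 'M[R]_m.
Variable Pi : 'cV[R]_m -> 'cV[R]_m -> 'cV[R]_n.
Hypotheses (Hrho : is_cl0_module p rho) (HPi : is_wedge2_map Pi)
  (Heq : equivariant p rho Pi).

Definition kerPi (s : 'cV[R]_m) := forall t, Pi s t = 0.

Lemma kerPiZ a s : kerPi s -> kerPi (a *: s).
Proof. by move=> s0 t; rewrite PiZl // s0 scaler0. Qed.

Lemma kerPi_spinel x y s : kerPi s -> kerPi (rho (spinel p x y) *m s).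
Proof. by move=> s0 t; have := Heq x y s t; rewrite !s0 addr0 soV0. Qed.

Lemma kerPi_clbase2 (a b : 'I_n) s : (a < b)%N ->
  kerPi s -> kerPi (rho (clbase R [set a; b]) *m s).
Proof.
move=> ab s0; have ev : cleven (clbase R [set a; b]).
  by apply: cleven_clbase; rewrite cards2 neq_ltn ab.
have -> : rho (clbase R [set a; b]) = (- 2%:R) *: rho (spinel p (stdb R a) (stdb R b)).
  by rewrite spinel_stdb // (rho_clscale Hrho) // scalerA mulrNN divff ?pnatr_eq0 // scale1r.
by rewrite -scalemxAl; apply/kerPiZ/kerPi_spinel.
Qed.

Lemma kerPi_clbase_iset a j s : (a + j.*2 <= n)%N ->
  kerPi s -> kerPi (rho (clbase R (iset n a (a + j.*2))) *m s).
Proof.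
elim: j a => [|j IH] a hj s0.
  by rewrite addn0 iset_empty // clbase0; case: Hrho => -> _ _; rewrite mul1mx.
have ha : (a < n)%N by lia.
have ha1 : (a.+1 < n)%N by lia.
have -> : iset n a (a + j.+1.*2) = [set Ordinal ha; Ordinal ha1] :|: iset n a.+2 (a.+2 + j.*2).
  have -> : (a + j.+1.*2 = a.+2 + j.*2)%N by rewrite doubleS; lia.
  by rewrite (iset_cons ha) ?(iset_cons ha1) ?setUA //; lia.
have ev2 : cleven (clbase R [set Ordinal ha; Ordinal ha1]).
  by apply: cleven_clbase; rewrite cards2 -val_eqE /= neq_ltn ltnSn.
have evI : cleven (clbase R (iset n a.+2 (a.+2 + j.*2))).
  by apply: cleven_clbase; rewrite card_iset ?addKn ?odd_double //; lia.
rewrite -(clmul_clbase_sorted _ p); last first.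
  by move=> x y; rewrite !inE -!val_eqE /=; lia.
rewrite (rho_clmul Hrho) // -mulmxA.
by apply: kerPi_clbase2 => //; apply: IH => //; lia.
Qed.

Section SpinelPair.
Variables (a b : 'I_n).
Hypothesis ab : (a < b)%N.

Local Notation X := (rho (spinel p (stdb R a) (stdb R b))).
Let mu : R := - (clsq R p a * clsq R p b) / 4%:R.

Lemma spinel_stdb_sqr (x : 'cV[R]_m) : X *m (X *m x) = mu *: x.
Proof.
have nab : a != b by rewrite neq_ltn ab.
have ev : cleven (clbase R [set a; b]) by apply: cleven_clbase; rewrite cards2 nab.
rewrite mulmxA spinel_stdb // (rho_clscale Hrho) // -scalemxAl -scalemxAr scalerA.
rewrite (rho_clbase_sqr Hrho) ?cards2 ?nab // clsign_set2 // scalerA -scalemxAl mul1mx.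
by congr (_ *: _); rewrite /mu; field.
Qed.

Lemma equivariant_stdb_coordl (x y : 'cV[R]_m) :
  Pi (X *m x) y a 0 + Pi x (X *m y) a 0 = - clsq R p b * Pi x y b 0.
Proof.
have := congr1 (fun z : 'cV[R]_n => z a 0) (Heq (stdb R a) (stdb R b) x y).
by rewrite /soV !mxE !spq_stdb eqxx (ltn_eqF ab) => ->; ring.
Qed.

Lemma equivariant_stdb_coordr (x y : 'cV[R]_m) :
  Pi (X *m x) y b 0 + Pi x (X *m y) b 0 = clsq R p a * Pi x y a 0.
Proof.
have := congr1 (fun z : 'cV[R]_n => z b 0) (Heq (stdb R a) (stdb R b) x y).
by rewrite /soV !mxE !spq_stdb eqxx (gtn_eqF ab) => ->; ring.
Qed.

Lemma Pi_spinel_coordl (x y : 'cV[R]_m) :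
  Pi (X *m x) (X *m y) a 0 = mu * Pi x y a 0.
Proof.
have := equivariant_stdb_coordl (X *m x) y.
rewrite spinel_stdb_sqr (PiZl HPi) mxE => hx.
have := equivariant_stdb_coordl x (X *m y).
rewrite spinel_stdb_sqr (PiZr HPi) mxE => hy.
have := equivariant_stdb_coordr x y => hb.
set Q := Pi (X *m x) (X *m y) a 0.
have -> : Q = ((mu * Pi x y a 0 + Q) + (Q + mu * Pi x y a 0)) / 2%:R - mu * Pi x y a 0.
  by field.
by rewrite hx hy -mulrDr hb /mu; field.
Qed.

Lemma Pi_coordl0_coordr0 (u : 'cV[R]_m) :
  (forall t, Pi u t a 0 = 0) -> forall t, Pi u t b 0 = 0.
Proof.
move=> ua0 t.
have mu0 : mu != 0.
  by rewrite /mu mulf_neq0 ?invr_eq0 ?pnatr_eq0 ?oppr_eq0 ?mulf_neq0 ?(clsq_neq0 R p).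
have Xua0 : Pi (X *m u) t a 0 = 0.
  have -> : t = mu^-1 *: (X *m (X *m t)) by rewrite spinel_stdb_sqr scalerA mulVf ?scale1r.
  by rewrite (PiZr HPi) mxE Pi_spinel_coordl ua0 !mulr0.
have := equivariant_stdb_coordl u t; rewrite Xua0 ua0 addr0 => /esym/eqP.
by rewrite mulf_eq0 oppr_eq0 (negbTE (clsq_neq0 R p b)) => /eqP.
Qed.

End SpinelPair.

Lemma kerPi_coord0 (i0 : 'I_n) (u : 'cV[R]_m) : val i0 = 0%N ->
  (forall t, Pi u t i0 0 = 0) -> kerPi u.
Proof.
move=> i00 ui0 t; apply/matrixP => k j; rewrite ord1 mxE.
case: (eqVneq k i0) => [-> | ki0]; first exact: ui0.
apply: (Pi_coordl0_coordr0 (a := i0)) => //.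
rewrite i00 lt0n; apply: contraNneq ki0 => k0.
by apply/eqP/val_inj; rewrite /= k0 i00.
Qed.

Lemma bform_coord0 p' (i0 : 'I_n) s t : val i0 = 0%N -> (0 < p)%N -> (0 < p' <= n)%N ->
  bform p p' rho Pi s t = Pi (rho (clbase R (iset n 1 p')) *m s) t i0 0.
Proof.
move=> i00 p0 p'n; rewrite /bform; have -> : stdb R 0 = stdb R i0 by rewrite i00.
by rewrite spq_stdb gammaE_clbase // /clsq i00 p0 opprK mul1r.
Qed.

Lemma kerPi_bform p' (i0 : 'I_n) s : val i0 = 0%N -> (0 < p)%N -> odd p' -> (p' <= n)%N ->
  kerPi s <-> (forall t, bform p p' rho Pi s t = 0).
Proof.
move=> i00 p0 oddp' p'n; have p'pos : (0 < p' <= n)%N by rewrite odd_gt0.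
set G := rho (clbase R (iset n 1 p')).
have p'E : p' = (1 + (p'./2).*2)%N by rewrite -[LHS]odd_double_half oddp'.
have GK s' : kerPi s' -> kerPi (G *m s').
  by rewrite /G p'E; apply: kerPi_clbase_iset; rewrite -p'E.
have GG : G *m G = clsign R p (iset n 1 p') (iset n 1 p') *: 1%:M.
  by apply: (rho_clbase_sqr Hrho); rewrite card_iset // {1}p'E addKn odd_double.
split=> [s0 t | b0].
  by rewrite (bform_coord0 _ _ i00) // (GK s s0 t) mxE.
have : kerPi (G *m (G *m s)).
  by apply/GK/(kerPi_coord0 i00) => t; rewrite -(bform_coord0 _ _ i00).
rewrite mulmxA GG -scalemxAl mul1mx => /(kerPiZ (clsign R p (iset n 1 p') (iset n 1 p'))^-1).
by rewrite scalerA mulVf ?clsign_neq0 // scale1r.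
Qed.

End PiKernel.

Lemma injective_iff_ker0 (U T : zmodType) (A : Type) (f : U -> A -> T) :
  (forall s s' t, f (s - s') t = f s t - f s' t) ->
  (forall s s', (forall t, f s t = f s' t) -> s = s') <->
  (forall s, (forall t, f s t = 0) -> s = 0).
Proof.
move=> fB; split=> [inj s s0 | ker0 s s' ss'].
  by apply: inj => t; rewrite s0; have := fB 0 0 t; rewrite !subrr.
by apply/eqP; rewrite -subr_eq0; apply/eqP/ker0 => t; rewrite fB ss' subrr.
Qed.

Theorem mainTheorem2 (R : realType) (p q p' p'' m : nat)
    (rho : {ffun {set 'I_(p + q)} -> R} -> 'M[R]_m)
    (Pi : 'cV[R]_m -> 'cV[R]_m -> 'cV[R]_(p + q)) :
  is_cl0_module p rho ->
  is_wedge2_map Pi ->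
  equivariant p rho Pi ->
  p = (p' + p'')%N ->
  (p' %% 4 = 3)%N ->
  (forall s : 'cV[R]_m,
      (forall t, Pi s t = 0) <-> (forall t, bform p p' rho Pi s t = 0))
  /\ (Pi_nondeg Pi <-> form_nondeg (bform p p' rho Pi)).
Proof.
move=> Hrho HPi Heq pE p'3.
have oddp' : odd p' by rewrite (divn_eq p' 4) p'3 oddD oddM andbF.
have [n0 p0 p'n] : [/\ 0 < p + q, 0 < p & p' <= p + q]%N by split; lia.
have kerE s := kerPi_bform Hrho HPi Heq s (i0 := Ordinal n0) erefl p0 oddp' p'n.
split; first exact: kerE.
rewrite /Pi_nondeg /form_nondeg !injective_iff_ker0.
- by split=> ker0 s /kerE; apply: ker0.
- by move=> s s' t; rewrite /bform mulmxBr (PiBl HPi) spqBr.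
- exact: PiBl.
Qed.
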